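(* Let $p$ be an odd prime, $k$ algebraically closed of characteristic $p$, $d=p^2+1$, and let $X$ be the Artin–Schreier curve $y^p-y=-x^{d}-x^{d/2+p}$ over $k$. Let $k_0$ be an integer with $0\le k_0<\frac{p-1}{2}$ and $l$ an integer with $0\le l\le \frac{d(p/2-1-k_0)}{p}$. Then there exists $y^mx^ndx\in\mathcal B_X$ with $m<\frac{p-1}{2}$ such that the largest term of $\mathcal C_X(y^mx^ndx)$ is $y^{k_0}x^ldx$.
   Context: $\mathcal C_X$ is the Cartier operator on $H^0(X,\Omega^1_X)$: the $p^{-1}$-semilinear map with $\mathcal C_X(f^p\alpha+\beta)=f\,\mathcal C_X(\alpha)+\mathcal C_X(\beta)$, $\mathcal C_X(x^{p-1}dx)=dx$, $\mathcal C_X(x^ndx)=0$ for $n\not\equiv-1\pmod p$. For an Artin–Schreier curve $y^p-y=f$ with $f\in k[x]$ of degree $D$ prime to $p$, the set $$\mathcal B_X=\left\{y^ix^jdx:\ 0\le i\le p-2,\ 0\le j\le \left\lceil\tfrac{(p-i-1)D}{p}\right\rceil-2\right\}$$ is a $k$-basis of $H^0(X,\Omega^1_X)$. Order $\mathcal B_X$ lexicographically with $y>x$: $y^ix^jdx>y^ax^bdx$ iff $i>a$, or $i=a$ and $j>b$. The ''largest term'' of a nonzero differential $\omega\in H^0(X,\Omega^1_X)$ is the largest element of $\mathcal B_X$ appearing with nonzero coefficient when $\omega$ is written in the basis $\mathcal B_X$. *)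

From mathcomp Require Import all_boot all_algebra.
Import GRing.Theory.
Local Open Scope ring_scope.

(* Model: the affine coordinate ring A = k[x,y]/(y^p - y - f(x)) of the
   Artin-Schreier curve, elements represented by bivariate polynomials
   g : {poly {poly k}} (outer variable = y, inner variable = x), reduced
   modulo the monic (in y) polynomial P = y^p - y - f(x).  A differential
   g dx with g in A is represented by g. *)

Definition AS_d (p : nat) : nat := (p ^ 2 + 1)%N.

Definition AS_f (k : fieldType) (p : nat) : {poly k} :=
  - 'X ^+ (AS_d p) - 'X ^+ ((AS_d p)./2 + p)%N.

Definition AS_eq (k : fieldType) (p : nat) : {poly {poly k}} :=
  'X ^+ p - 'X - (AS_f k p)%:P.

Definition xA (k : fieldType) : {poly {poly k}} := ('X : {poly k})%:P.
Definition yA (k : fieldType) : {poly {poly k}} := 'X.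

(* y^i x^j dx is in B_X : 0 <= i <= p-2, 0 <= j <= ceil((p-i-1)D/p) - 2 *)
Definition in_BX (p D i j : nat) : bool :=
  ((i <= p - 2) && (j.+2 <= ((p - i - 1) * D + p - 1) %/ p))%N.

(* C is the Cartier operator on A dx (acting on representatives):
   well defined on A, additive, p^{-1}-semilinear (C(h^p a) = h C(a)),
   C(x^{p-1} dx) = dx, C(x^n dx) = 0 for n <> -1 mod p.
   Outputs are reduced normal forms. These rules determine C uniquely. *)
Definition is_Cartier (k : fieldType) (p : nat)
    (C : {poly {poly k}} -> {poly {poly k}}) : Prop :=
  [/\ forall a, C a = C (a %% AS_eq k p),
      forall a b, C (a + b) = C a + C b,
      forall h a, C (h ^+ p * a) = (h * C a) %% AS_eq k p,
      C (xA k ^+ p.-1) = 1 &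
      forall n : nat, ~~ (p %| n.+1)%N -> C (xA k ^+ n) = 0].

Definition largest_term_is (k : fieldType) (w : {poly {poly k}}) (i0 j0 : nat)
  : Prop :=
  (w`_i0)`_j0 != 0 /\
  (forall i j : nat, (i0 < i)%N \/ (i = i0 /\ (j0 < j)%N) -> (w`_i)`_j = 0).

From mathcomp Require Import all_boot all_algebra.
From mathcomp Require Import zify ring.
Import GRing.Theory.

Set Implicit Arguments.
Unset Strict Implicit.
Unset Printing Implicit Defensive.

(* Since y = y^p + x^e + x^d on the curve (e = d/2 + p), semilinearity of the
   Cartier operator gives
     C(y^m x^n dx) = sum_j C(m,j) y^j sum_t C(m-j,t) C(x^(n + d t + e (m-j-t)) dx),
   and C(x^N dx) = x^((N+1)/p - 1) dx if p | N+1, and 0 otherwise.  For p = 2q+1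
   one has d = 1 and 2e = 1 modulo p, so 2 (N+1) = 2 (n+1) + r + t (mod p) with
   r = m - j: among 0 <= t <= r <= R, divisibility pins down r + t.  Taking
   m = k0 + R and n with n + d t0 + e (R - t0) + 1 = p (l+1) for some
   t0 in {R-1, R}, the only surviving term with j >= k0 is
   C(m,k0) C(R,t0) y^k0 x^l dx, and the binomials are units because m < p.
   The bound on l is what lets such R, t0, n be found with y^m x^n dx
   in B_X. *)

Section Exponents.
Variable q : nat.
(* p = 2q+1, d = p^2+1 and e = d/2 + p, written as polynomials in q. *)
Local Notation p := (2 * q + 1).
Local Notation d := (4 * q * q + 4 * q + 2).
Local Notation e := (2 * q * q + 4 * q + 2).

Lemma exponent_double_modp n r t : t <= r ->
  2 * (n + d * t + e * (r - t)).+1 = 2 * n.+1 + (r + t) %[mod p].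
Proof.
move=> le_tr.
have -> : 2 * (n + d * t + e * (r - t)).+1
          = p * (p * (r + t) + 2 * (r - t)) + (2 * n.+1 + (r + t)).
  have [s ->] : exists s, r = t + s by exists (r - t); lia.
  by rewrite addKn; ring.
by rewrite mulnC modnMDl.
Qed.

Lemma exponent_dvd_unique n R t0 r t :
  t0 <= R <= t0.+1 -> R < q -> t <= r <= R ->
  p %| (n + d * t0 + e * (R - t0)).+1 -> p %| (n + d * t + e * (r - t)).+1 ->
  r = R /\ t = t0.
Proof.
move=> /andP[le_t0R le_Rt0] lt_Rq /andP[le_tr le_rR] /dvdnP[w0 Ew0] /dvdnP[w Ew].
have := exponent_double_modp n le_t0R; have := exponent_double_modp n le_tr.
rewrite Ew0 Ew !mulnA !modnMl => Ert Ert0.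
have : 2 * n.+1 + (r + t) = 2 * n.+1 + (R + t0) %[mod p] by rewrite -Ert -Ert0.
by move/eqP; rewrite eqn_modDl !modn_small => [/eqP||]; lia.
Qed.

Lemma exponent_cap l c : c < q -> 2 * l * p <= d * (2 * c + 1) -> l <= p * c + q.
Proof. move=> lt_cq hl; rewrite leqNgt; apply/negP => hc; nia. Qed.

Lemma exists_exponents k0 l : k0 < q -> 2 * l * p <= d * (p - 2 - 2 * k0) ->
  exists R t0 n, [/\ k0 + R < q, t0 <= R <= t0.+1,
    n + d * t0 + e * (R - t0) = p * l + p - 1 &
    n.+2 * p <= (p - (k0 + R) - 1) * d + (p - 1)].
Proof.
move=> lt_k0q hl.
(* Divide L = p (l+1) - 1 by d, capping the quotient R at c; a remainder
   at least e is absorbed by raising R by one and keeping t0 = R - 1. *)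
set c := q - 1 - k0; set L := p * l + p - 1.
have {}hl : l <= p * c + q.
  apply: exponent_cap; first lia.
  by rewrite (_ : 2 * c + 1 = p - 2 - 2 * k0); lia.
have [capped | uncapped] := leqP (d * c) L.
  exists c, c, (L - d * c); split; [lia | lia | lia |].
  have -> : p - (k0 + c) - 1 = q + 1 by lia.
  apply: leq_trans (leq_mul (_ : _ <= 2 * q * q + 3 * q + 2) (leqnn p)) _; nia.
have d_gt0 : 0 < d by lia.
have Ldiv := divn_eq L d; have Lmod := ltn_pmod L d_gt0.
have lt_Lc : L %/ d < c by rewrite ltn_divLR // mulnC.
have [small | large] := ltnP (L %% d) e.
  exists (L %/ d), (L %/ d), (L %% d); split; [lia | lia | nia |].
  have hm : q + 2 <= p - (k0 + L %/ d) - 1 by lia.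
  apply: leq_trans (leq_addr (p - 1) _).
  apply: leq_trans (leq_mul (_ : _ <= 2 * q * q + 4 * q + 3) (leqnn p)) _; first lia.
  by apply: leq_trans (leq_mul hm (leqnn d)); nia.
exists (L %/ d).+1, (L %/ d), (L %% d - e); split; [lia | lia | nia |].
have hm : q + 1 <= p - (k0 + (L %/ d).+1) - 1 by lia.
apply: leq_trans (leq_addr (p - 1) _).
apply: leq_trans (leq_mul (_ : _ <= 2 * q * q + 1) (leqnn p)) _; first lia.
by apply: leq_trans (leq_mul hm (leqnn d)); nia.
Qed.
End Exponents.

Local Open Scope ring_scope.

Section CartierOnMonomials.
Variables (k : fieldType) (p : nat) (C : {poly {poly k}} -> {poly {poly k}}).
Hypothesis p_gt1 : (1 < p)%N.
Hypothesis CartierC : is_Cartier k p C.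
Local Notation P := (AS_eq k p).
Local Notation d := (AS_d p).
Local Notation e := ((AS_d p)./2 + p)%N.

Lemma size_AS_eq_tail : (size ('X + (AS_f k p)%:P)%R < size ('X^p : {poly {poly k}}))%N.
Proof.
rewrite size_polyXn ltnS; apply: leq_trans (size_polyD _ _) _.
by rewrite size_polyX geq_max (leq_trans (size_polyC_leq1 _)) //; lia.
Qed.

Lemma AS_eqE : P = 'X^p - ('X + (AS_f k p)%:P).
Proof. by rewrite /AS_eq opprD addrA. Qed.

Lemma size_AS_eq : size P = p.+1.
Proof. by rewrite AS_eqE size_polyDl ?size_polyN ?size_AS_eq_tail ?size_polyXn. Qed.

Lemma AS_eq_monic : P \is monic.
Proof. by apply/monicP; rewrite AS_eqE lead_coefDl ?lead_coefXn ?size_polyN ?size_AS_eq_tail. Qed.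

Lemma modp_AS_eq_small (a : {poly {poly k}}) : (size a <= p)%N -> a %% P = a.
Proof. by move=> le_ap; rewrite modp_small // size_AS_eq ltnS. Qed.

Lemma modp_AS_eq_addMl (a b : {poly {poly k}}) : (a + b * P) %% P = a %% P.
Proof.
have unit_lcP : lead_coef P \is a GRing.unit by rewrite (monicP AS_eq_monic) unitr1.
by rewrite (Pdiv.IdomainUnit.modpD unit_lcP) modp_mull addr0.
Qed.

Lemma modp_AS_eq_exprD (u a : {poly {poly k}}) m : ((u + P) ^+ m * a) %% P = (u ^+ m * a) %% P.
Proof.
have [b ->] : exists b, (u + P) ^+ m = u ^+ m + b * P.
  elim: m => [|m [b IH]]; first by exists 0; rewrite !expr0 mul0r addr0.
  exists (u ^+ m + b * u + b * P); rewrite !exprS IH.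
  by move: (u ^+ m) => v; ring.
by rewrite mulrDl -mulrA (mulrC P) mulrA modp_AS_eq_addMl.
Qed.

Lemma Cartier_modp (a b : {poly {poly k}}) : a %% P = b %% P -> C a = C b.
Proof. by case: CartierC => C_modp _ _ _ _ eq_ab; rewrite C_modp eq_ab -C_modp. Qed.

Lemma CartierD (a b : {poly {poly k}}) : C (a + b) = C a + C b.
Proof. by case: CartierC. Qed.

Lemma Cartier0 : C 0 = 0.
Proof. by apply: (addrI (C 0)); rewrite -CartierD !addr0. Qed.

Lemma Cartier_sum I (r : seq I) (Q : pred I) (F : I -> {poly {poly k}}) :
  C (\sum_(i <- r | Q i) F i) = \sum_(i <- r | Q i) C (F i).
Proof. exact: (big_morph C CartierD Cartier0). Qed.

Lemma CartierMn (a : {poly {poly k}}) n : C (a *+ n) = C a *+ n.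
Proof. by elim: n => [|n IHn]; rewrite ?mulr0n ?Cartier0 // !mulrS CartierD IHn. Qed.

Lemma Cartier_frobenius (h a : {poly {poly k}}) : C (h ^+ p * a) = (h * C a) %% P.
Proof. by case: CartierC. Qed.

Definition cartier_xpow (N : nat) : {poly k} :=
  if (p %| N.+1)%N then 'X^((N.+1 %/ p).-1) else 0.

Lemma xA_exp N : xA k ^+ N = ('X^N)%:P.
Proof. by rewrite /xA rmorphXn. Qed.

Lemma Cartier_xA_exp N : C (xA k ^+ N) = (cartier_xpow N)%:P.
Proof.
have lt_Np : (N %% p < p)%N by rewrite ltn_mod; lia.
rewrite /cartier_xpow {1}(divn_eq N p) exprD exprM Cartier_frobenius.
case: CartierC => _ _ _ C_xp1 C_xn.
have [eq_Np1 | ne_Np1] := eqVneq (N %% p)%N p.-1.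
  rewrite eq_Np1 C_xp1 mulr1 modp_AS_eq_small; last by rewrite xA_exp size_polyC; case: (_ != 0); lia.
  have -> : (N.+1 = (N %/ p).+1 * p)%N by lia.
  by rewrite dvdn_mull // mulnK ?xA_exp //; lia.
have ndvd_Np : ~~ (p %| (N %% p).+1)%N by apply/negP => /dvdn_leq; lia.
have -> : (N.+1 = N %/ p * p + (N %% p).+1)%N by lia.
by rewrite C_xn // mulr0 mod0p dvdn_addr ?dvdn_mull // (negbTE ndvd_Np).
Qed.

(* C((x^e + x^d)^r x^n dx); the coefficient of y^j in C(y^m x^n dx) is
   'C(m, j) times cartier_coef (m - j) n. *)
Definition cartier_coef (r n : nat) : {poly k} :=
  \sum_(t < r.+1) cartier_xpow (n + d * t + e * (r - t)) *+ 'C(r, t).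

Lemma Cartier_binomial_xA r n :
  C ((xA k ^+ e + xA k ^+ d) ^+ r * xA k ^+ n) = (cartier_coef r n)%:P.
Proof.
rewrite exprDn mulr_suml Cartier_sum rmorph_sum; apply: eq_bigr => t _.
rewrite mulrnAl CartierMn rmorphMn -!exprM -!exprD.
have -> : (e * (r - t) + d * t + n = n + d * t + e * (r - t))%N by ring.
by rewrite Cartier_xA_exp.
Qed.

Lemma AS_eq_yA : yA k ^+ p + (xA k ^+ e + xA k ^+ d) = yA k + P.
Proof.
rewrite /AS_eq /AS_f rmorphB rmorphN !rmorphXn -/(xA k) -/(yA k).
by move: (yA k ^+ p) (xA k ^+ d) (xA k ^+ e) (yA k) => a b c y; ring.
Qed.

Lemma Cartier_monomial m n : (m < p)%N ->
  C (yA k ^+ m * xA k ^+ n)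
  = \sum_(j < m.+1) (yA k ^+ j * (cartier_coef (m - j) n)%:P) *+ 'C(m, j).
Proof.
move=> lt_mp.
rewrite (@Cartier_modp _ ((yA k ^+ p + (xA k ^+ e + xA k ^+ d)) ^+ m * xA k ^+ n));
  last by rewrite AS_eq_yA modp_AS_eq_exprD.
rewrite addrC exprDn mulr_suml Cartier_sum; apply: eq_bigr => -[j lt_jm] _ /=.
rewrite mulrnAl CartierMn -exprM mulnC exprM mulrAC mulrC Cartier_frobenius.
rewrite Cartier_binomial_xA modp_AS_eq_small //.
apply: leq_trans (size_polyMleq _ _) _.
rewrite size_polyXn; have := size_polyC_leq1 (cartier_coef (m - j) n).
move: (size _) => s le_s1; rewrite addSn /=; lia.
Qed.

Lemma coef_Cartier_monomial m n i : (m < p)%N ->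
  (C (yA k ^+ m * xA k ^+ n))`_i
  = if (i <= m)%N then cartier_coef (m - i) n *+ 'C(m, i) else 0.
Proof.
move=> lt_mp; rewrite Cartier_monomial // coef_sum.
rewrite (eq_bigr (fun j : 'I_m.+1 =>
  if (j == i :> nat) then cartier_coef (m - j) n *+ 'C(m, j) else 0)).
  by rewrite -big_mkcond (big_ord1_eq _ (fun j => cartier_coef (m - j) n *+ 'C(m, j))) ltnS.
move=> j _; rewrite coefMn coefXnM coefC.
have [<- | ne_ji] := eqVneq (j : nat) i; first by rewrite ltnn subnn.
case: ltnP => [_ | le_ji]; first by rewrite mul0rn.
have lt_ji : (j < i)%N by rewrite ltn_neqAle ne_ji le_ji.
by rewrite subn_eq0 leqNgt lt_ji mul0rn.
Qed.

Lemma cartier_xpow_dvd N l : (N.+1 = p * l.+1)%N -> cartier_xpow N = 'X^l.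
Proof. by rewrite /cartier_xpow => ->; rewrite dvdn_mulr // mulKn //; lia. Qed.

Lemma cartier_coef_eq0 r n :
  (forall t, (t <= r)%N -> ~~ (p %| (n + d * t + e * (r - t)).+1)%N) ->
  cartier_coef r n = 0.
Proof.
move=> ndvd; rewrite /cartier_coef big1 // => -[t lt_tr] _ /=.
by rewrite /cartier_xpow (negbTE (ndvd t _)) ?mul0rn.
Qed.

Lemma cartier_coef_single r n t0 l : (t0 <= r)%N ->
  ((n + d * t0 + e * (r - t0)).+1 = p * l.+1)%N ->
  (forall t, (t <= r)%N -> (p %| (n + d * t + e * (r - t)).+1)%N -> t = t0) ->
  cartier_coef r n = 'X^l *+ 'C(r, t0).
Proof.
move=> le_t0r Et0 uniq_t0; rewrite /cartier_coef.
rewrite (eq_bigr (fun t : 'I_r.+1 => if (t == t0 :> nat) then 'X^l *+ 'C(r, t) else 0)).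
  by rewrite -big_mkcond (big_ord1_eq _ (fun t => 'X^l *+ 'C(r, t))) ltnS le_t0r.
move=> -[t lt_tr] _ /=; have [-> | ne_tt0] := eqVneq t t0; first by rewrite (cartier_xpow_dvd Et0).
rewrite /cartier_xpow; case: ifP => [dvd_t | _]; last by rewrite mul0rn.
by case/eqP: ne_tt0; apply: uniq_t0.
Qed.

Lemma largest_term_Cartier_monomial k0 R t0 n l :
  (k0 + R < p)%N -> (t0 <= R)%N ->
  ((n + d * t0 + e * (R - t0)).+1 = p * l.+1)%N ->
  (forall r t, (t <= r <= R)%N -> (p %| (n + d * t + e * (r - t)).+1)%N ->
     r = R /\ t = t0) ->
  ('C(k0 + R, k0) * 'C(R, t0))%:R != 0 :> k ->
  largest_term_is k (C (yA k ^+ (k0 + R) * xA k ^+ n)) k0 l.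
Proof.
move=> lt_mp le_t0R Et0 uniq_Rt0 nz_bin.
have coef_k0 : cartier_coef R n = 'X^l *+ 'C(R, t0).
  apply: cartier_coef_single => // t le_tR dvd_t.
  by have := uniq_Rt0 R t; rewrite le_tR leqnn => /(_ isT dvd_t) [].
split=> [|i j [lt_k0i | [-> lt_lj]]]; rewrite coef_Cartier_monomial //.
- by rewrite leq_addr addKn coef_k0 !coefMn coefXn eqxx -mulrnA mulnC.
- case: ifP => le_im; last by rewrite coef0.
  rewrite cartier_coef_eq0 ?mul0rn ?coef0 // => t le_t; apply/negP => dvd_t.
  have le_tR : (t <= k0 + R - i <= R)%N by rewrite le_t; lia.
  by have [] := uniq_Rt0 _ _ le_tR dvd_t; lia.
- by rewrite leq_addr addKn coef_k0 !coefMn coefXn gtn_eqF // !mul0rn.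
Qed.

End CartierOnMonomials.

Lemma prime_ndvd_fact p n : prime p -> (n < p)%N -> ~~ (p %| n`!)%N.
Proof.
move=> p_prime; elim: n => [|n IHn] lt_np; first by rewrite dvdn1 gtn_eqF ?prime_gt1.
rewrite factS Euclid_dvdM // negb_or IHn ?andbT; last lia.
by apply/negP => /dvdn_leq; lia.
Qed.

Lemma prime_ndvd_bin p a b : prime p -> (a < p)%N -> (b <= a)%N -> ~~ (p %| 'C(a, b))%N.
Proof.
move=> p_prime lt_ap le_ba; apply/negP => dvd_bin.
by case/negP: (prime_ndvd_fact p_prime lt_ap); rewrite -(bin_fact le_ba) dvdn_mulr.
Qed.

Theorem mainTheorem5 (k : closedFieldType) (p : nat)
  (C : {poly {poly k}} -> {poly {poly k}}) :
  prime p -> odd p -> p \in [pchar k] -> is_Cartier k p C ->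
  forall k0 l : nat,
    (2 * k0 + 1 < p)%N ->
    (2 * l * p <= AS_d p * (p - 2 - 2 * k0))%N ->
    exists m n : nat,
      [/\ in_BX p (AS_d p) m n, (2 * m + 1 < p)%N &
          largest_term_is k (C (yA k ^+ m * xA k ^+ n)) k0 l].
Proof.
move=> p_prime p_odd pchar_k CartierC k0 l lt_k0p hl.
have [q Ep] : exists q, p = (2 * q + 1)%N.
  by exists p./2; move: (odd_double_half p); rewrite p_odd; lia.
have Ed : AS_d p = (4 * q * q + 4 * q + 2)%N by rewrite /AS_d Ep; ring.
have Ee : ((AS_d p)./2 + p = 2 * q * q + 4 * q + 2)%N.
  by rewrite Ed Ep (_ : 4 * q * q + 4 * q + 2 = (2 * q * q + 2 * q + 1).*2)%N ?doubleK; lia.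
have lt_k0q : (k0 < q)%N by lia.
rewrite Ed Ep in hl.
have [R [t0 [n [lt_mq bracket_t0R En bound]]]] := exists_exponents lt_k0q hl.
exists (k0 + R)%N, n; split; [| lia |].
- rewrite /in_BX leq_divRL ?prime_gt0 // -addnBA; last lia.
  by rewrite Ed Ep bound andbT; lia.
- apply: (largest_term_Cartier_monomial (t0 := t0) (prime_gt1 p_prime) CartierC).
  + lia.
  + by case/andP: bracket_t0R.
  + by rewrite Ee Ed Ep; lia.
  + move=> r t le_trR; rewrite Ee Ed Ep; apply: (exponent_dvd_unique bracket_t0R _ le_trR); first lia.
    by rewrite En; apply/dvdnP; exists l.+1; lia.
  + rewrite -(dvdn_pcharf pchar_k) Euclid_dvdM // negb_or !prime_ndvd_bin //; lia.
Qed.
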